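(* Let $I\subset\mathbb{R}$ be an open interval, $\lambda\in\mathbb{R}$, and let $x_1,x_2,x_3:I\to\mathbb{R}$ be smooth functions with $x_3(u)\neq0$ and $x_3'(u)\neq 0$ for all $u$, such that the curve $\gamma(u)=(x_1(u),x_2(u),x_3(u),\lambda x_3(u))$ is parametrized by arclength. Let $M$ be the knotted sphere with position vector $$X(u,v)=\big(x_1(u),\,x_2(u),\,x_3(u)(\cos v-\lambda\sin v),\,x_3(u)(\sin v+\lambda\cos v)\big).$$ Then the conjugate surface $\widetilde M$, given by the Laplace transform $X_{-1}=X-\frac{1}{\Gamma_{12}^2}X_u$, lies in the rotation plane $\Pi=\{x\in\mathbb{E}^4: x_3=x_4=0\}$.
   Context: For a surface $X(u,v)$ with first fundamental form $E,F,G$, the Christoffel symbols $\Gamma_{ij}^k$ are defined by the Gauss formula: the tangential part of $X_{uv}$ equals $\Gamma_{12}^1X_u+\Gamma_{12}^2X_v$. The Laplace transform $X_{-1}$ of the surface is $X_{-1}=X-X_u/\Gamma_{12}^2$ (defined where $\Gamma_{12}^2\neq0$); for this surface $\Gamma_{12}^2=x_3'/x_3$. *)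

From Stdlib Require Import Reals.
From Coquelicot Require Import Coquelicot.
Open Scope R_scope.

(* A point of E^4 is represented by its coordinate function; coordinates are
   indexed 0,1,2,3 (paper's x_1,...,x_4). Only indices < 4 are ever used. *)
Definition pt4 := nat -> R.

Definition dot4 (a b : pt4) : R := a 0%nat * b 0%nat + a 1%nat * b 1%nat
  + a 2%nat * b 2%nat + a 3%nat * b 3%nat.

Definition surf := R -> R -> pt4.

Definition Xu (X : surf) : surf := fun u v i => Derive (fun s => X s v i) u.
Definition Xv (X : surf) : surf := fun u v i => Derive (fun t => X u t i) v.
Definition Xuv (X : surf) : surf := fun u v i => Derive (fun t => Xu X u t i) v.

Definition fffE (X : surf) u v := dot4 (Xu X u v) (Xu X u v).
Definition fffF (X : surf) u v := dot4 (Xu X u v) (Xv X u v).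
Definition fffG (X : surf) u v := dot4 (Xv X u v) (Xv X u v).

(* Christoffel symbol Gamma_{12}^2 from the Gauss formula: the tangential part
   of X_uv is Gamma_{12}^1 X_u + Gamma_{12}^2 X_v; solving the 2x2 system
   <T,X_u> = <X_uv,X_u>, <T,X_v> = <X_uv,X_v> by Cramer's rule. *)
Definition Gamma12_2 (X : surf) u v :=
  (fffE X u v * dot4 (Xuv X u v) (Xv X u v)
   - fffF X u v * dot4 (Xuv X u v) (Xu X u v))
  / (fffE X u v * fffG X u v - fffF X u v ^ 2).

Definition laplace_m1 (X : surf) : surf :=
  fun u v i => X u v i - Xu X u v i / Gamma12_2 X u v.

Definition knotX (lam : R) (x1 x2 x3 : R -> R) : surf :=
  fun u v i => match i with
    | 0%nat => x1 u
    | 1%nat => x2 u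
    | 2%nat => x3 u * (cos v - lam * sin v)
    | _ => x3 u * (sin v + lam * cos v)
    end.

Definition in_open_interval (a b : Rbar) (u : R) : Prop :=
  Rbar_lt a u /\ Rbar_lt u b.

Definition smooth_on (I : R -> Prop) (f : R -> R) : Prop :=
  forall (n : nat) (u : R), I u -> ex_derive_n f n u.

From Stdlib Require Import Reals Lra Lia FunctionalExtensionality.
From Coquelicot Require Import Coquelicot.
Open Scope R_scope.

(* The u-derivative of the knotted sphere is the knotted sphere built on the
   derivative curve, and its v-derivative is the knotted sphere over
   (0, 0, x3) turned by a quarter turn.  All inner products of such vectors
   are those of the profile curves, weighted by (1 + lam^2) cos of the angle
   difference in the last slot; hence F = 0, E G = (x1'^2 + x2'^2 +
   (1 + lam^2) x3'^2)(1 + lam^2) x3^2 and Gamma_12^2 = x3'/x3.  In the third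
   and fourth coordinates X_u is x3'/x3 times X, so X - X_u / Gamma_12^2
   vanishes there. *)

Lemma knotX_dot lam a1 a2 a3 b1 b2 b3 u v w :
  dot4 (knotX lam a1 a2 a3 u v) (knotX lam b1 b2 b3 u w) =
  a1 u * b1 u + a2 u * b2 u + (1 + lam ^ 2) * a3 u * b3 u * cos (v - w).
Proof. unfold dot4, knotX; rewrite cos_minus; ring. Qed.

(* Coquelicot's [Derive] is total and linear, so no differentiability is needed. *)
Lemma Xu_knotX lam x1 x2 x3 u v i :
  Xu (knotX lam x1 x2 x3) u v i = knotX lam (Derive x1) (Derive x2) (Derive x3) u v i.
Proof.
  unfold Xu, knotX.
  destruct i as [|[|[|i]]]; try reflexivity; apply Derive_scal_l.
Qed.

Lemma Xv_knotX lam x1 x2 x3 u v i :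
  Xv (knotX lam x1 x2 x3) u v i =
  knotX lam (fun _ => 0) (fun _ => 0) x3 u (v + PI / 2) i.
Proof.
  unfold Xv, knotX.
  rewrite cos_plus, sin_plus, cos_PI2, sin_PI2.
  destruct i as [|[|[|i]]]; try apply Derive_const;
    apply is_derive_unique; auto_derive; auto; ring.
Qed.

Lemma Xuv_knotX lam x1 x2 x3 u v i :
  Xuv (knotX lam x1 x2 x3) u v i =
  knotX lam (fun _ => 0) (fun _ => 0) (Derive x3) u (v + PI / 2) i.
Proof.
  unfold Xuv.
  rewrite (Derive_ext _ (fun t => knotX lam (Derive x1) (Derive x2) (Derive x3) u t i))
    by (intro t; apply Xu_knotX).
  apply Xv_knotX.
Qed.

Lemma Gamma12_2_knotX lam x1 x2 x3 u v :
  x3 u <> 0 -> Derive x3 u <> 0 ->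
  Gamma12_2 (knotX lam x1 x2 x3) u v = Derive x3 u / x3 u.
Proof.
  intros Hx3 Hdx3.
  set (X := knotX lam x1 x2 x3).
  set (Y := knotX lam (Derive x1) (Derive x2) (Derive x3)).
  set (Z := knotX lam (fun _ => 0) (fun _ => 0) x3).
  set (W := knotX lam (fun _ => 0) (fun _ => 0) (Derive x3)).
  assert (HXu : Xu X u v = Y u v)
    by (apply functional_extensionality; intro; apply Xu_knotX).
  assert (HXv : Xv X u v = Z u (v + PI / 2))
    by (apply functional_extensionality; intro; apply Xv_knotX).
  assert (HXuv : Xuv X u v = W u (v + PI / 2))
    by (apply functional_extensionality; intro; apply Xuv_knotX).
  unfold Gamma12_2, fffE, fffF, fffG.
  rewrite HXu, HXv, HXuv; unfold Y, Z, W; rewrite !knotX_dot.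
  replace (v - (v + PI / 2)) with (- (PI / 2)) by ring.
  replace (v + PI / 2 - (v + PI / 2)) with 0 by ring.
  replace (v - v) with 0 by ring.
  rewrite cos_neg, cos_PI2, cos_0.
  assert (Hlam : 0 < 1 + lam ^ 2) by nra.
  assert (HE : 0 < Derive x1 u * Derive x1 u + Derive x2 u * Derive x2 u
                   + (1 + lam ^ 2) * Derive x3 u * Derive x3 u * 1).
  { assert (0 < Derive x3 u * Derive x3 u) by nra. nra. }
  field; repeat split; try lra; auto.
Qed.

Lemma laplace_m1_knotX_rotation_plane lam x1 x2 x3 u v i :
  (2 <= i)%nat -> x3 u <> 0 -> Derive x3 u <> 0 ->
  laplace_m1 (knotX lam x1 x2 x3) u v i = 0.
Proof.
  intros Hi Hx3 Hdx3.
  unfold laplace_m1; rewrite Gamma12_2_knotX, Xu_knotX by assumption.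
  unfold knotX.
  destruct i as [|[|[|i]]]; try lia; field; auto.
Qed.

Theorem proposition9 (a b : Rbar) (lam : R) (x1 x2 x3 : R -> R) :
  Rbar_lt a b ->
  smooth_on (in_open_interval a b) x1 ->
  smooth_on (in_open_interval a b) x2 ->
  smooth_on (in_open_interval a b) x3 ->
  (forall u, in_open_interval a b u -> x3 u <> 0) ->
  (forall u, in_open_interval a b u -> Derive x3 u <> 0) ->
  (* gamma(u) = (x1, x2, x3, lam x3) is parametrized by arclength *)
  (forall u, in_open_interval a b u ->
     Derive x1 u ^ 2 + Derive x2 u ^ 2 + Derive x3 u ^ 2
     + Derive (fun s => lam * x3 s) u ^ 2 = 1) ->
  forall u v, in_open_interval a b u ->
    Gamma12_2 (knotX lam x1 x2 x3) u v <> 0 /\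
    laplace_m1 (knotX lam x1 x2 x3) u v 2%nat = 0 /\
    laplace_m1 (knotX lam x1 x2 x3) u v 3%nat = 0.
Proof.
  intros _ _ _ _ Hx3 Hdx3 _ u v Hu.
  specialize (Hx3 u Hu); specialize (Hdx3 u Hu).
  split; [|split]; try (apply laplace_m1_knotX_rotation_plane; auto).
  rewrite Gamma12_2_knotX by assumption.
  unfold Rdiv; apply Rmult_integral_contrapositive_currified; auto with real.
Qed.
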